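(* Let $V$ be a module over the subalgebra $\mathfrak{b}=\bigoplus_{m\geq 0}(\mathbb{C}L_m\oplus\mathbb{C}G_m)\oplus\mathbb{C}c$ of the Ramond algebra $\mathcal{R}$. Assume that there exists $t\in\mathbb{Z}_+$ such that (1) the action of $L_t$ on $V$ is injective, and (2) $L_iV=0$ for all $i>t$. Then $G_jV=0$ for all $j>t$.
   Context: The Ramond algebra $\mathcal{R}=\mathcal{R}_{\bar 0}\oplus\mathcal{R}_{\bar 1}$ is the Lie superalgebra with basis $\{L_m,G_m,c\mid m\in\mathbb{Z}\}$, where $\mathcal{R}_{\bar 0}=\mathrm{span}\{L_m,c\}$, $\mathcal{R}_{\bar 1}=\mathrm{span}\{G_m\}$, and brackets $[L_m,L_n]=(m-n)L_{m+n}+\delta_{m+n,0}\frac{m^3-m}{12}c$, $[L_m,G_n]=(\frac m2-n)G_{m+n}$, $[G_m,G_n]=2L_{m+n}+\frac13\delta_{m+n,0}(m^2-\frac14)c$, $[\mathcal{R},c]=0$. Modules are $\mathbb{Z}_2$-graded (super)modules. $\mathbb{Z}_+$ denotes the positive integers. *)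

From mathcomp Require Import all_boot all_order all_algebra.
From mathcomp Require Import complex.
From mathcomp Require Import reals.
Set Implicit Arguments. Unset Strict Implicit. Unset Printing Implicit Defensive.
Import Order.TTheory GRing.Theory Num.Theory.
Local Open Scope ring_scope.

Section BModule.
Variables (K : fieldType) (V : lmodType K).

Definition lin_op (f : V -> V) : Prop :=
  forall (a : K) (u v : V), f (a *: u + v) = a *: f u + f v.

Definition subspace (P : V -> Prop) : Prop :=
  P 0 /\ forall (a : K) (u v : V), P u -> P v -> P (a *: u + v).

Definition z2_grading (V0 V1 : V -> Prop) : Prop :=
  [/\ subspace V0, subspace V1,
      (forall v, exists v0 v1, [/\ V0 v0, V1 v1 & v = v0 + v1]) &
      (forall v, V0 v -> V1 v -> v = 0)].

(* (L, G, c, V0, V1) makes V a Z_2-graded module over the subalgebra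
   b = (+)_{m>=0} (K L_m (+) K G_m) (+) K c of the Ramond algebra:
   L m, G m, c are the actions of L_m, G_m (m >= 0) and c; L m and c are
   even, G m is odd; the super-brackets of b act as super-commutators:
   [x,y] acts as x y - (-1)^{|x||y|} y x. *)
Definition b_module (L G : nat -> V -> V) (c : V -> V) (V0 V1 : V -> Prop) : Prop :=
  [/\ (forall m, lin_op (L m)) /\ (forall m, lin_op (G m)) /\ lin_op c,
      z2_grading V0 V1,
      [/\ (forall m v, (V0 v -> V0 (L m v)) /\ (V1 v -> V1 (L m v))),
          (forall m v, (V0 v -> V1 (G m v)) /\ (V1 v -> V0 (G m v))) &
          (forall v, (V0 v -> V0 (c v)) /\ (V1 v -> V1 (c v)))] &
      [/\
      (forall (m n : nat) v,
         L m (L n v) - L n (L m v) =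
           (m%:R - n%:R) *: L (m + n)%N v
           + ((m + n == 0)%N%:R * ((m%:R ^+ 3 - m%:R) / 12%:R)) *: c v),
      (forall (m n : nat) v,
         L m (G n v) - G n (L m v) = (m%:R / 2%:R - n%:R) *: G (m + n)%N v),
      (forall (m n : nat) v,
         G m (G n v) + G n (G m v) =
           2%:R *: L (m + n)%N v
           + ((m + n == 0)%N%:R / 3%:R * (m%:R ^+ 2 - 1 / 4%:R)) *: c v) &
      (forall m v, c (L m v) = L m (c v) /\ c (G m v) = G m (c v))]].

End BModule.

From mathcomp Require Import all_boot all_order all_algebra.
From mathcomp Require Import complex.
From mathcomp Require Import reals.
Import Order.TTheory GRing.Theory Num.Theory.
Local Open Scope ring_scope.

(* The bracket [L_j, G_0] = (j/2) G_j exhibits G_j v as (2/j)(L_j G_0 v - G_0 L_j v),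
   and both terms vanish as soon as L_j acts by zero. *)

Lemma lin_op0 {K : fieldType} {V : lmodType K} {f : V -> V} : lin_op f -> f 0 = 0.
Proof.
by move=> f_lin; have := f_lin (-1) 0 0; rewrite scaler0 add0r scaleN1r addNr.
Qed.

Section BModuleVanishing.
Context {K : numFieldType} {V : lmodType K}.
Context {L G : nat -> V -> V} {c : V -> V} {V0 V1 : V -> Prop}.
Hypothesis HV : b_module L G c V0 V1.

Lemma b_module_G_lin m : lin_op (G m).
Proof. by case: HV => [[_ [G_lin _]]]. Qed.

Lemma b_module_LG0 j v : L j (G 0 v) - G 0 (L j v) = (j%:R / 2%:R) *: G j v.
Proof. by case: HV => _ _ _ [_ LG _ _]; rewrite LG addn0 subr0. Qed.

Lemma b_module_G_eq0 j : (0 < j)%N -> (forall v, L j v = 0) -> forall v, G j v = 0.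
Proof.
move=> j_gt0 Lj0 v; have := b_module_LG0 j v.
rewrite !Lj0 (lin_op0 (b_module_G_lin 0%N)) subr0 => /esym/eqP.
rewrite scaler_eq0 mulf_eq0 invr_eq0 !pnatr_eq0 eqn0Ngt j_gt0 /=.
by move/eqP.
Qed.

End BModuleVanishing.

Theorem lemma3p1 (R : realType) (V : lmodType R[i])
  (L G : nat -> V -> V) (c : V -> V) (V0 V1 : V -> Prop)
  (HV : b_module L G c V0 V1)
  (t : nat) (t_pos : (0 < t)%N)
  (Hinj : injective (L t))
  (Hvan : forall (i : nat), (t < i)%N -> forall v : V, L i v = 0) :
  forall (j : nat), (t < j)%N -> forall v : V, G j v = 0.
Proof.
move=> j t_lt_j; apply: (b_module_G_eq0 HV j); last exact: Hvan.
exact: leq_ltn_trans (leq0n t) t_lt_j.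
Qed.
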